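(* Let $l\le n$ be positive integers and let $\mathbb F\subseteq\mathbb D_1^n$ be an index set of local height $l$. If $|\mathbb F|<2^l-1$, then there exists an index $(k,j)\in\mathbb D_1^n\setminus\mathbb F$ such that $\mathrm{lh}(\mathbb F\cup\{(k,j)\})=l$.
   Context: Dyadic intervals: $\Delta_k^{(j)}:=[\frac{j-1}{2^k},\frac{j}{2^k})$ for $k\ge0$. Dyadic tree $\mathbb D:=\{(k,j):k\ge1;\ j=1,\dots,2^{k-1}\}$; $\mathbb D_1^n:=\{(k,j):k=1,\dots,n;\ j=1,\dots,2^{k-1}\}$. Branches: $\mathbb B(t):=\{(k,j)\in\mathbb D:t\in\Delta_{k-1}^{(j)}\}$ for $t\in[0,1)$; local height of a finite $\mathbb F\subseteq\mathbb D$: $\mathrm{lh}(\mathbb F):=\max_{t\in[0,1)}|\mathbb F\cap\mathbb B(t)|$. *)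

From HB Require Import structures.
From mathcomp Require Import all_boot all_order all_algebra.
From mathcomp Require Import finmap.
From mathcomp Require Import reals.
Set Implicit Arguments. Unset Strict Implicit. Unset Printing Implicit Defensive.
Import Order.TTheory GRing.Theory Num.Theory.
Local Open Scope ring_scope.
Local Open Scope fset_scope.

Definition inD1n (n : nat) (p : nat * nat) : bool :=
  [&& (1 <= p.1)%N, (p.1 <= n)%N, (1 <= p.2)%N & (p.2 <= 2 ^ (p.1 - 1))%N].

Definition inD (p : nat * nat) : bool :=
  [&& (1 <= p.1)%N, (1 <= p.2)%N & (p.2 <= 2 ^ (p.1 - 1))%N].

Definition in_dyadic (R : realType) (k j : nat) (t : R) : bool :=
  ((j.-1)%:R / 2 ^+ k <= t) && (t < j%:R / 2 ^+ k).

Definition in_branch (R : realType) (t : R) (p : nat * nat) : bool :=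
  inD p && in_dyadic (p.1 - 1) p.2 t.

Definition branch_count (R : realType) (F : {fset nat * nat}) (t : R) : nat :=
  #|` [fset p in F | in_branch t p] |.

Definition has_local_height (R : realType) (F : {fset nat * nat}) (l : nat) : Prop :=
  (exists t : R, 0 <= t < 1 /\ branch_count F t = l) /\
  (forall t : R, 0 <= t < 1 -> (branch_count F t <= l)%N).

From HB Require Import structures.
From mathcomp Require Import all_boot all_order all_algebra.
From mathcomp Require Import finmap.
From mathcomp Require Import reals.
From mathcomp Require Import zify.
From Stdlib Require Import Classical.
Set Implicit Arguments. Unset Strict Implicit. Unset Printing Implicit Defensive.

(* Suppose no node of D_1^n outside F can be added without raising the local
   height.  Then every missing node lies on a branch that already meets F in
   l nodes.  Branches of the depth-n tree are the root-to-leaf paths, and a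
   subtree in which every missing node lies on such a full path contains at
   least 2^l - 1 nodes of F: if its root is in F, both child subtrees have the
   property for l - 1; if not, the full path through the root continues in
   either child subtree, which keeps the property for l (and shows that the
   subtree is deep enough).  Applied to the whole tree, |F| >= 2^l - 1. *)

Section DyadicTree.
Variable n : nat.

(* Nodes are the pairs (k, j) of D_1^n.  [on_path m p]: p lies on the path
   from the root to the leaf number m (counted from 0) of level n.
   [in_subtree k a p]: p lies in the subtree rooted at (k, a.+1); note the
   shift from the 0-based a to the 1-based j. *)

Definition on_path (m : nat) (p : nat * nat) : bool :=
  [&& 1 <= p.1, p.1 <= n & p.2 == m %/ 2 ^ (n - p.1) + 1].

Definition in_subtree (k a : nat) (p : nat * nat) : bool :=
  [&& k <= p.1, p.1 <= n, 0 < p.2 & (p.2 - 1) %/ 2 ^ (p.1 - k) == a].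

Lemma in_subtree_root k a : k <= n -> in_subtree k a (k, a.+1).
Proof. by move=> kn; rewrite /in_subtree /= leqnn kn subnn expn0 divn1 subSS subn0 eqxx. Qed.

Lemma in_subtree_parent k c p : in_subtree k.+1 c p -> in_subtree k (c %/ 2) p.
Proof.
case: p => x y; rewrite /in_subtree /= => /and4P [kx xn y0 /eqP <-].
by rewrite xn y0 ltnW //= -divnMA -expnSr subnSK.
Qed.

Lemma in_subtree_on_path k a m p :
  in_subtree k a p -> on_path m p -> a = m %/ 2 ^ (n - k).
Proof.
case: p => x y; rewrite /in_subtree /on_path /=.
move=> /and4P [kx xn _ /eqP <-] /and3P [_ _ /eqP ->].
by rewrite addnK -divnMA -expnD; congr (_ %/ 2 ^ _); lia.
Qed.

Lemma in_subtree_split k a p : k <= n ->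
  in_subtree k a p =
  (p == (k, a.+1)) + in_subtree k.+1 a.*2 p + in_subtree k.+1 a.*2.+1 p :> nat.
Proof.
move=> kn; case: p => x y; rewrite /in_subtree /= xpair_eqE.
case: (ltngtP x k) => [//|kx|->]; last first.
  rewrite subnn expn0 divn1 kn /= !addn0.
  by case: y => [|y]; rewrite ?subSS ?subn0 ?eqSS.
rewrite -(subnSK kx) expnSr divnMA add0n.
case: (x <= n) (0 < y) => [] [] //=; move: ((y - 1) %/ _) => q.
by case: eqP; case: eqP; case: eqP; lia.
Qed.

Variable s : seq (nat * nat).
Hypothesis s_uniq : uniq s.

Definition path_count (k m : nat) : nat :=
  count (fun p => on_path m p && (k <= p.1)) s.

Definition subtree_count (k a : nat) : nat := count (in_subtree k a) s.

Lemma path_count_rec k m : 0 < k -> k <= n ->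
  path_count k m = ((k, (m %/ 2 ^ (n - k)).+1) \in s) + path_count k.+1 m.
Proof.
move=> k0 kn; set r := (k, _).
have split_r p : on_path m p && (k <= p.1) = (p == r) + on_path m p && (k < p.1) :> nat.
  case: p => x y; rewrite /on_path /= xpair_eqE.
  by case: (ltngtP k x) => [||<-]; rewrite ?andbF ?andbT //= k0 kn addn0 addn1.
rewrite /path_count -(count_uniq_mem _ s_uniq).
by elim: s => //= p t ->; rewrite split_r; lia.
Qed.

Lemma path_count_le k m : 0 < k -> path_count k m <= n.+1 - k.
Proof.
move=> k0; move Eh: (n.+1 - k) => h; elim: h k k0 Eh => [|h IH] k k0 Eh.
  rewrite leqn0 /path_count (eq_count (a2 := pred0)) ?count_pred0 // => -[x y] /=.
  by rewrite /on_path /=; apply/negP => /andP [/and3P [_ xn _] kx]; lia.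
have kn : k <= n by lia.
rewrite path_count_rec //; have := IH k.+1 isT ltac:(lia); lia.
Qed.

Lemma subtree_count_rec k a : k <= n ->
  subtree_count k a =
  ((k, a.+1) \in s) + subtree_count k.+1 a.*2 + subtree_count k.+1 a.*2.+1.
Proof.
move=> kn; rewrite /subtree_count -(count_uniq_mem _ s_uniq).
by elim: s => //= p t ->; rewrite in_subtree_split //; lia.
Qed.

Definition saturated (k a l : nat) : Prop :=
  forall p, p \notin s -> in_subtree k a p ->
  exists2 m, on_path m p & l <= path_count k m.

Lemma saturated_child k c l : 0 < k -> k <= n ->
  saturated k (c %/ 2) (((k, (c %/ 2).+1) \in s) + l) -> saturated k.+1 c l.
Proof.
move=> k0 kn sat p ps pc; have pa := in_subtree_parent pc.
have [m pm lm] := sat p ps pa; exists m => //.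
by move: lm; rewrite path_count_rec // -(in_subtree_on_path pa pm) leq_add2l.
Qed.

Lemma saturated_subtree_count k a l : 0 < k -> l <= n.+1 - k ->
  saturated k a l -> 2 ^ l - 1 <= subtree_count k a.
Proof.
move=> k0; move Eh: (n.+1 - k) => h.
elim: h k a l k0 Eh => [|h IH] k a l k0 Eh lh sat; first by rewrite leqn0 in lh; rewrite (eqP lh).
have kn : k <= n by lia.
rewrite subtree_count_rec //; case: (boolP ((k, a.+1) \in s)) => root_s.
  case: l lh sat => [|l] lh sat; first by rewrite expn0.
  have child c : c %/ 2 = a -> 2 ^ l - 1 <= subtree_count k.+1 c.
    move=> ca; apply: IH; [by []|lia|lia|].
    by apply: saturated_child; rewrite // ca root_s.
  have := child a.*2 ltac:(lia); have := child a.*2.+1 ltac:(lia).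
  rewrite expnS; lia.
have root_a := in_subtree_root a kn; have [m rm lm] := sat _ root_s root_a.
move: lm; rewrite path_count_rec // -(in_subtree_on_path root_a rm) (negbTE root_s) => lm.
have l_le_h : l <= h by have := @path_count_le k.+1 m isT; lia.
have sat_child : saturated k.+1 a.*2 l.
  by apply: saturated_child; rewrite // -muln2 mulnK // (negbTE root_s).
have := IH k.+1 a.*2 l isT ltac:(lia) l_le_h sat_child; lia.
Qed.

End DyadicTree.

Local Open Scope fset_scope.

Lemma card_fset_sep (T : choiceType) (A : {fset T}) (P : pred T) :
  #|` [fset x in A | P x]| = count P A.
Proof.
have -> : [fset x in A | P x] = [fset x in filter P A].
  by apply/fsetP => x; rewrite !inE mem_filter andbC.
by rewrite card_fseq undup_id ?filter_uniq ?fset_uniq // size_filter.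
Qed.

Lemma branch_count_fsetU1 (R : realType) (F : {fset nat * nat}) p (t : R) :
  branch_count (p |` F) t = ((p \notin F) && in_branch t p + branch_count F t)%N.
Proof.
rewrite /branch_count; case: (boolP (in_branch t p)) => tp; last first.
  rewrite andbF; congr (size (enum_fset _)); apply/fsetP => q.
  by rewrite !inE; case: eqP => // ->; rewrite (negbTE tp) !andbF.
have -> : [fset q in p |` F | in_branch t q] = p |` [fset q in F | in_branch t q].
  by apply/fsetP => q; rewrite !inE; case: eqP => // ->.
by rewrite cardfsU1 !inE tp !andbT.
Qed.

Lemma in_subtree_top n p : in_subtree n 1 0 p = inD1n n p.
Proof.
case: p => x [|y]; rewrite /in_subtree /inD1n /= ?andbF //.
rewrite subSS subn0; congr [&& _, _ & _].
by rewrite -leqn0 -ltnS ltn_divLR ?expn_gt0 // mul1n.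
Qed.

Lemma subtree_count_top n (F : {fset nat * nat}) :
  (forall p, p \in F -> inD1n n p) -> subtree_count n F 1 0 = #|` F|.
Proof.
by move=> FD; rewrite -count_predT; apply: eq_in_count => p /FD; rewrite in_subtree_top.
Qed.

Section DyadicBranch.
Import Order.TTheory GRing.Theory Num.Theory.
Local Open Scope ring_scope.
Variables (R : realType) (n : nat).

Definition leaf_index (t : R) : nat := Num.truncn (t * 2 ^+ (n - 1)).

Lemma in_dyadic_on_path (t : R) x y : 0 <= t -> (0 < x <= n)%N -> (0 < y)%N ->
  in_dyadic (x - 1) y t = on_path n (leaf_index t) (x, y).
Proof.
move=> t0 /andP [x0 xn] y0; rewrite /in_dyadic /on_path /leaf_index /= x0 xn /=.
have scale : (2 : R) ^+ (n - 1) = 2 ^+ (x - 1) * 2 ^+ (n - x).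
  by rewrite -exprD; congr (_ ^+ _); lia.
have N0 : 0 < (2 : R) ^+ (n - x) by apply: exprn_gt0.
rewrite ler_pdivrMr ?exprn_gt0 // ltr_pdivlMr ?exprn_gt0 //.
rewrite -(ler_pM2r N0) -(ltr_pM2r N0) -!mulrA -scale.
have u0 : 0 <= t * 2 ^+ (n - 1) by rewrite mulr_ge0 ?exprn_ge0.
move: (t * _) u0 => u u0; rewrite -!natrX -!natrM.
rewrite -truncn_ge_nat // -truncn_lt_nat // -leq_divRL ?expn_gt0 // -ltn_divLR ?expn_gt0 //.
move: (Num.truncn u %/ _)%N => q.
by rewrite -subn1; apply/andP/eqP => [[lo hi]|->]; lia.
Qed.

Lemma in_branch_on_path (t : R) p : 0 <= t -> inD1n n p ->
  in_branch t p = on_path n (leaf_index t) p.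
Proof.
case: p => x y t0 /and4P [x0 xn y0 yx].
by rewrite /in_branch /inD /= x0 y0 yx in_dyadic_on_path // x0.
Qed.

Lemma branch_count_path_count (F : {fset nat * nat}) (t : R) :
  0 <= t -> (forall p, p \in F -> inD1n n p) ->
  branch_count F t = path_count n F 1 (leaf_index t).
Proof.
move=> t0 FD; rewrite /branch_count card_fset_sep; apply: eq_in_count => p /FD pD.
by rewrite in_branch_on_path //; case/and4P: pD => ->; rewrite andbT.
Qed.

End DyadicBranch.

Lemma local_height_fsetU1 (R : realType) (F : {fset nat * nat}) (l : nat) p :
  has_local_height R F l -> p \notin F ->
  (forall t : R, (0 <= t < 1)%R -> in_branch t p -> branch_count F t < l) ->
  has_local_height R (p |` F) l.
Proof.
move=> [[t0 [t0_01 t0_l]] F_le] pF p_low.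
have le_l (t : R) : (0 <= t < 1)%R -> branch_count (p |` F) t <= l.
  move=> t01; rewrite branch_count_fsetU1 pF /=.
  by case: (boolP (in_branch t p)) => tp; [exact: p_low | exact: F_le].
split=> //; exists t0; split=> //.
by apply/eqP; rewrite eqn_leq le_l //= branch_count_fsetU1 t0_l leq_addl.
Qed.

Theorem lemma4p1 (R : realType) (l n : nat) (F : {fset nat * nat}) :
  (0 < l)%N -> (l <= n)%N ->
  (forall p, p \in F -> inD1n n p) ->
  has_local_height R F l ->
  (#|` F | < 2 ^ l - 1)%N ->
  exists p : nat * nat,
    [/\ inD1n n p, p \notin F & has_local_height R (p |` F) l].
Proof.
move=> l0 ln FD hF cardF; apply: NNPP => no_ext.
have sat : saturated n F 1 0 l.
  move=> p pF; rewrite in_subtree_top => pD.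
  have [t [/andP [t0 _] tp tl]] :
      exists t : R, [/\ (0 <= t < 1)%R, in_branch t p & l <= branch_count F t].
    apply: NNPP => no_t; apply: no_ext; exists p; split=> //.
    apply: local_height_fsetU1 => // t t01 tp; rewrite ltnNge; apply/negP => tl.
    by apply: no_t; exists t.
  exists (leaf_index n t); first by rewrite -in_branch_on_path.
  by rewrite -branch_count_path_count.
have := @saturated_subtree_count n F (fset_uniq F) 1 0 l isT ltac:(lia) sat.
by rewrite (subtree_count_top FD) leqNgt cardF.
Qed.
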